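(* Let $n\ge1$ and let $\mathfrak{n}=\mathfrak{n}(n)$ be as in the context. Let $D$ be a diagonalizable derivation of $\mathfrak{n}$ with eigenvalues $1$, $2$ and $3$. Then the eigenspaces of $D$ for the eigenvalues $1,2,3$ have dimensions $d_1=n+3$, $d_2=\frac{n(n+1)}{2}+3$ and $d_3=2n+2$ respectively. In particular, if $\mathfrak{n}=\tilde{\mathfrak{n}}_1\oplus\tilde{\mathfrak{n}}_2\oplus\tilde{\mathfrak{n}}_3$ is any grading of $\mathfrak{n}$, then $\dim\tilde{\mathfrak{n}}_i=d_i$ for $i=1,2,3$.
   Context: Fix a field of characteristic zero and a positive integer $n$. The Lie algebra $\mathfrak{n}(n)$ has basis $e_1,\dots,e_n,a,b,x$; $u,y$; $e_i\wedge e_j$ ($1\le i<j\le n$); $c$; $x_1,\dots,x_n$; $u_1,\dots,u_n$; $y_1,\dots,y_n$; $f,h$. Its bracket is defined on basis elements by: $[e_i,e_j]=e_i\wedge e_j$ for $i<j$ (so $[e_j,e_i]=-e_i\wedge e_j$), $[e_i,x]=x_i$, $[e_i,u]=u_i$, $[e_i,y]=y_i$, $[a,b]=c$, $[a,y]=f$, $[a,c]=h$, $[b,u]=h$, $[b,y]=h$, $[x,u]=f$, $[x,y]=h$, extended by antisymmetry, and all other brackets of pairs of basis elements are zero. A grading $\mathfrak{n}=\tilde{\mathfrak{n}}_1\oplus\tilde{\mathfrak{n}}_2\oplus\tilde{\mathfrak{n}}_3$ is a vector space decomposition with $[\tilde{\mathfrak{n}}_i,\tilde{\mathfrak{n}}_j]\subset\tilde{\mathfrak{n}}_{i+j}$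 for all $i,j$, where $\tilde{\mathfrak{n}}_m=0$ for $m>3$. *)

From HB Require Import structures.
From mathcomp Require Import all_boot all_order all_algebra.
Set Implicit Arguments. Unset Strict Implicit. Unset Printing Implicit Defensive.
Import GRing.Theory.
Local Open Scope ring_scope.

(* Basis of the Lie algebra n(n):
   e_1..e_n, a, b, x ; u, y ; e_i /\ e_j (i<j) ; c ; x_1..x_n ; u_1..u_n ;
   y_1..y_n ; f, h.  Indices 1..n are represented by 'I_n (0-based). *)
Inductive nbasis (n : nat) : Type :=
  | bE of 'I_n | bA | bB | bX | bU | bY
  | bW of {p : 'I_n * 'I_n | (p.1 < p.2)%N}
  | bC | bXi of 'I_n | bUi of 'I_n | bYi of 'I_n | bF | bH.

Arguments bA {n}. Arguments bB {n}. Arguments bX {n}. Arguments bU {n}.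
Arguments bY {n}. Arguments bC {n}. Arguments bF {n}. Arguments bH {n}.

Section NBasisFin.
Variable n : nat.
Definition wT := {p : 'I_n * 'I_n | (p.1 < p.2)%N}.
Definition codeT := ('I_n + ('I_n + ('I_n + ('I_n + (wT + 'I_8)))))%type.

Definition nb_enc (z : nbasis n) : codeT :=
  match z with
  | bE i => inl i
  | bXi i => inr (inl i)
  | bUi i => inr (inr (inl i))
  | bYi i => inr (inr (inr (inl i)))
  | bW p => inr (inr (inr (inr (inl p))))
  | bA => inr (inr (inr (inr (inr (@Ordinal 8 0 isT)))))
  | bB => inr (inr (inr (inr (inr (@Ordinal 8 1 isT)))))
  | bX => inr (inr (inr (inr (inr (@Ordinal 8 2 isT)))))
  | bU => inr (inr (inr (inr (inr (@Ordinal 8 3 isT)))))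
  | bY => inr (inr (inr (inr (inr (@Ordinal 8 4 isT)))))
  | bC => inr (inr (inr (inr (inr (@Ordinal 8 5 isT)))))
  | bF => inr (inr (inr (inr (inr (@Ordinal 8 6 isT)))))
  | bH => inr (inr (inr (inr (inr (@Ordinal 8 7 isT)))))
  end.

Definition nb_dec (c : codeT) : nbasis n :=
  match c with
  | inl i => bE i
  | inr (inl i) => bXi i
  | inr (inr (inl i)) => bUi i
  | inr (inr (inr (inl i))) => bYi i
  | inr (inr (inr (inr (inl p)))) => bW p
  | inr (inr (inr (inr (inr k)))) =>
      match val k with
      | 0 => bA | 1 => bB | 2 => bX | 3 => bU | 4 => bY | 5 => bC | 6 => bF
      | _ => bH
      end
  end.

Lemma nb_encK : cancel nb_enc nb_dec.
Proof. by case. Qed.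
End NBasisFin.

#[hnf] HB.instance Definition _ (n : nat) :=
  Countable.copy (nbasis n) (can_type (@nb_encK n)).
#[hnf] HB.instance Definition _ (n : nat) :=
  Finite.copy (nbasis n) (can_type (@nb_encK n)).

Definition nalg (F : fieldType) (n : nat) := {ffun nbasis n -> F^o}.

(* The Lie bracket, defined by bilinear extension of the bracket on basis
   elements given in the paper (antisymmetric, all unlisted brackets zero). *)
Definition nbr (F : fieldType) (n : nat) (v w : nalg F n) : nalg F n :=
  let alt (p q : nbasis n) : F^o := v p * w q - v q * w p in
  [ffun z : nbasis n =>
    (match z with
    | bW p => alt (bE (sval p).1) (bE (sval p).2)   (* [e_i,e_j] = e_i/\e_j *)
    | bXi i => alt (bE i) bX                         (* [e_i,x] = x_i *)
    | bUi i => alt (bE i) bU                         (* [e_i,u] = u_i *)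
    | bYi i => alt (bE i) bY                         (* [e_i,y] = y_i *)
    | bC => alt bA bB                                (* [a,b] = c *)
    | bF => alt bA bY + alt bX bU                    (* [a,y] = [x,u] = f *)
    | bH => alt bA bC + alt bB bU + alt bB bY + alt bX bY
                       (* [a,c] = [b,u] = [b,y] = [x,y] = h *)
    | _ => 0
    end : F^o)].

Definition is_derivation (F : fieldType) (n : nat) (D : 'End(nalg F n)) :=
  forall v w, D (nbr v w) = nbr (D v) w + nbr v (D w).

Definition is_grading3 (F : fieldType) (n : nat) (N1 N2 N3 : {vspace nalg F n}) :=
  let N (k : nat) := match k with 1 => N1 | 2 => N2 | 3 => N3 | _ => 0%VS end in
  [/\ directv (N1 + N2 + N3)%VS, (N1 + N2 + N3)%VS = fullv &
    forall i j : nat, (1 <= i <= 3)%N -> (1 <= j <= 3)%N ->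
      forall v w, v \in N i -> w \in N j -> nbr v w \in N (i + j)%N].

From HB Require Import structures.
From mathcomp Require Import all_boot all_order all_algebra.
From mathcomp Require Import ring zify.
Import GRing.Theory.
Set Implicit Arguments. Unset Strict Implicit. Unset Printing Implicit Defensive.
Local Open Scope ring_scope.

(* In a grading n = N1 + N2 + N3 the subspace N2 + N3 is an abelian ideal containing
   [n, n], and N3 is central.  Write each generator v as v1 + v' with v1 in N1 and v'
   in N2 + N3.  The relations [x, y] = [b, y] = [b, u] = h and [x, u] = f, whose right
   hand sides lie in N3, force [v1, w1] = 0 for the corresponding pairs, and the
   resulting coordinate equations show that u and y lie in N2 + N3 themselves.  Hence
   N2 + N3 and N3 are spanned by the basis vectors of degree >= 2, resp. 3, of the
   standard grading, and the dimensions follow by counting.  For a derivation D with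
   eigenvalues 1, 2, 3 in characteristic 0, [E_i, E_j] is contained in E_(i+j), so
   the eigenspaces form such a grading. *)

Lemma regular_scaleE (R : pzSemiRingType) (k x : R^o) : k *: x = k * x.
Proof. by []. Qed.

(** * Coordinate subspaces of finite functions *)

Section CoordinateSpan.
Variables (F : fieldType) (T : finType).
Local Notation V := {ffun T -> F^o}.

(* Locked: otherwise unification may unfold [deltav z t] down to [enum_rank t], which
   does not terminate in practice when [T] is [nbasis n] for a variable [n]. *)
Fact deltav_key : unit. Proof. by []. Qed.
Definition deltav (z : T) : V := locked_with deltav_key [ffun t => (t == z)%:R].

Lemma deltavE z t : deltav z t = (t == z)%:R.
Proof. by rewrite /deltav locked_withE ffunE. Qed.

Lemma ffun_deltav_sum (A : {pred T}) (v : V) :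
  {in [predC A], forall z, v z = 0} -> v = \sum_(z in A) v z *: deltav z.
Proof.
move=> v0; apply/ffunP => t; rewrite sum_ffunE.
under eq_bigr => z _ do rewrite ffunE deltavE [_ *: _]mulr_natr mulrb.
case At: (t \in A).
  rewrite (bigD1 t) //= eqxx big1 ?addr0 // => z /andP[_].
  by rewrite eq_sym => /negbTE ->.
rewrite big1 ?v0 ?inE ?At // => z Az.
by case: eqP => // tz; rewrite -tz At in Az.
Qed.

Definition basis_span (A : {pred T}) : {vspace V} :=
  <<[seq deltav z | z <- enum A]>>%VS.

Lemma deltav_basis_span (A : {pred T}) z : z \in A -> deltav z \in basis_span A.
Proof. by move=> Az; apply/memv_span/map_f; rewrite mem_enum. Qed.

Lemma basis_span_subv (A : {pred T}) (U : {vspace V}) :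
  {in A, forall z, deltav z \in U} -> (basis_span A <= U)%VS.
Proof. by move=> AU; apply/span_subvP => w /mapP[z]; rewrite mem_enum => /AU Uz ->. Qed.

Lemma mem_basis_span (A : {pred T}) (v : V) :
  (v \in basis_span A) <-> {in [predC A], forall z, v z = 0}.
Proof.
split=> [Av z Az | v0]; last first.
  by rewrite (ffun_deltav_sum v0) rpred_sum // => z /deltav_basis_span/memvZ.
rewrite (coord_span (X := in_tuple _) Av) sum_ffunE big1 // => i _.
have /mapP[t] := mem_nth 0 (ltn_ord i); rewrite mem_enum => At ->.
rewrite ffunE deltavE; case: eqP => [zt|_]; last by rewrite mulr0n scaler0.
by rewrite zt inE At in Az.
Qed.

Lemma dim_basis_span (A : {pred T}) : \dim (basis_span A) = #|A|.
Proof.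
have dim_le (B : {pred T}) : (\dim (basis_span B) <= #|B|)%N.
  by rewrite (leq_trans (dim_span _)) // size_map -cardE.
have full : (basis_span A + basis_span [predC A])%VS = fullv.
  apply/eqP; rewrite eqEsubv subvf; apply/subvP => v _.
  rewrite (@ffun_deltav_sum predT v) // (bigID [in A]) /=.
  by apply: memv_add; apply: rpred_sum => z Az; apply/memvZ/deltav_basis_span.
have := dim_le A; have := dim_le [predC A].
have := dimv_add_leqif (basis_span A) (basis_span [predC A]).
rewrite full dimvf /dim /= muln1 => -[le_sum _] leC leA; rewrite -(cardC A) in le_sum.
by apply/eqP; rewrite eqn_leq leA -(leq_add2r #|[predC A]|) (leq_trans le_sum) ?leq_add2l.
Qed.

End CoordinateSpan.

Arguments basis_span {F T} A.

(** * The Lie algebra n(n) *)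

Section Bracket.
Variables (F : fieldType) (n : nat).
Local Notation V := (nalg F n).

Lemma nbrC (v w : V) : nbr v w = - nbr w v.
Proof. by apply/ffunP => -[] *; rewrite !ffunE /=; ring. Qed.

Lemma nbrDl (u v w : V) : nbr (u + v) w = nbr u w + nbr v w.
Proof. by apply/ffunP => -[] *; rewrite !ffunE /= ?ffunE; ring. Qed.

Lemma nbrBl (u v w : V) : nbr (u - v) w = nbr u w - nbr v w.
Proof. by apply/ffunP => -[] *; rewrite !ffunE /= ?ffunE; ring. Qed.

Lemma nbrZl k (v w : V) : nbr (k *: v) w = k *: nbr v w.
Proof.
by apply/ffunP => -[] *; rewrite !ffunE /= ?ffunE !regular_scaleE; ring.
Qed.

Lemma nbrDr (u v w : V) : nbr w (u + v) = nbr w u + nbr w v.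
Proof. by rewrite nbrC nbrDl opprD -!nbrC. Qed.

Lemma nbrBr (u v w : V) : nbr w (u - v) = nbr w u - nbr w v.
Proof. by rewrite nbrC nbrBl opprB addrC -!nbrC. Qed.

Lemma nbrZr k (v w : V) : nbr w (k *: v) = k *: nbr w v.
Proof. by rewrite nbrC nbrZl -scalerN -nbrC. Qed.

End Bracket.

Section NBasis.
Variables (F : fieldType) (n : nat).
Local Notation d := (@deltav F (nbasis n)).

(* Constructor-wise equality, which simplifies cleanly where [==] would expose the
   countable encoding of [nbasis n]. *)
Definition nbeq (s t : nbasis n) : bool :=
  match s, t with
  | bE i, bE j | bXi i, bXi j | bUi i, bUi j | bYi i, bYi j => i == j
  | bW p, bW q => p == q
  | bA, bA | bB, bB | bX, bX | bU, bU | bY, bY | bC, bC | bF, bF | bH, bH => true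
  | _, _ => false
  end.

Lemma nbeqE (s t : nbasis n) : (s == t) = nbeq s t.
Proof. by case: s; case: t. Qed.

Definition derived_basis : pred (nbasis n) := fun z =>
  match z with bE _ | bA | bB | bX | bU | bY => false | _ => true end.

Lemma deltav_nbasisE z : d z = [ffun t => (nbeq t z)%:R].
Proof. by apply/ffunP => t; rewrite deltavE ffunE nbeqE. Qed.

Ltac basis_bracket :=
  rewrite !deltav_nbasisE; apply/ffunP => -[] *; rewrite !ffunE /=; ring.

Lemma nbr_ab : nbr (d bA) (d bB) = d bC. Proof. basis_bracket. Qed.
Lemma nbr_ac : nbr (d bA) (d bC) = d bH. Proof. basis_bracket. Qed.
Lemma nbr_ay : nbr (d bA) (d bY) = d bF. Proof. basis_bracket. Qed.
Lemma nbr_bu : nbr (d bB) (d bU) = d bH. Proof. basis_bracket. Qed.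
Lemma nbr_by : nbr (d bB) (d bY) = d bH. Proof. basis_bracket. Qed.
Lemma nbr_xu : nbr (d bX) (d bU) = d bF. Proof. basis_bracket. Qed.
Lemma nbr_xy : nbr (d bX) (d bY) = d bH. Proof. basis_bracket. Qed.
Lemma nbr_ex i : nbr (d (bE i)) (d bX) = d (bXi i). Proof. basis_bracket. Qed.
Lemma nbr_eu i : nbr (d (bE i)) (d bU) = d (bUi i). Proof. basis_bracket. Qed.
Lemma nbr_ey i : nbr (d (bE i)) (d bY) = d (bYi i). Proof. basis_bracket. Qed.

Lemma nbr_ee (p : wT n) : nbr (d (bE (sval p).1)) (d (bE (sval p).2)) = d (bW p).
Proof.
rewrite !deltav_nbasisE; apply/ffunP => -[i||||||q||i|i|i||]; rewrite !ffunE /=; try ring.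
case: p q => [[i j] /= ij] [[k l] /= kl].
rewrite -[in RHS]val_eqE /= xpair_eqE.
have : ~~ ((l == i) && (k == j)).
  by apply/negP => /andP[/eqP li /eqP kj]; move: ij kl; rewrite -li -kj; lia.
by case: (k == i); case: (l == j); case: (l == i); case: (k == j) => //= _; ring.
Qed.

Definition ndeg (z : nbasis n) : nat :=
  match z with
  | bE _ | bA | bB | bX => 1
  | bU | bY | bW _ | bC | bXi _ => 2
  | bUi _ | bYi _ | bF | bH => 3
  end.

Lemma nbr_span_deg3 (v g : nalg F n) : g \in basis_span [pred z | (1 < ndeg z)%N] ->
  nbr v g \in basis_span [pred z | ndeg z == 3%N].
Proof.
move/mem_basis_span => g0; apply/mem_basis_span => z; rewrite ffunE.
by case: z => //= *; rewrite ?(g0 (bE _)) ?(g0 bA) ?(g0 bB) ?(g0 bX) // !mulr0 subrr.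
Qed.

End NBasis.

Arguments derived_basis {n}.

Section Counting.
Variable n : nat.
Local Open Scope nat_scope.

Lemma nb_decK : cancel (@nb_dec n) (@nb_enc n).
Proof.
by case=> [i|[i|[i|[i|[p|[[|[|[|[|[|[|[|[|m]]]]]]]] lt_m8]]]]]] //=;
  congr (inr (inr (inr (inr (inr _))))); apply: val_inj.
Qed.

Lemma card_nbasis_pred (P : pred (nbasis n)) :
  #|P| = (\sum_(c : codeT n) P (nb_dec c))%N.
Proof.
rewrite -sum1_card big_mkcond /= (reindex (@nb_dec n)) /=; last first.
  by exists (@nb_enc n) => z _; [exact: nb_decK | exact: nb_encK].
by apply: eq_bigr => c _; rewrite unfold_in; case: (P _).
Qed.

Ltac count_basis :=
  rewrite card_nbasis_pred !big_sumType /= !big_ord_recl big_ord0 /= !sum_nat_const !card_ord;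
  rewrite (@eq_card _ xpredT {: wT n}) //; lia.

Lemma card_nbasis : #|{: nbasis n}| = (#|{: wT n}| + 4 * n + 8)%N.
Proof. count_basis. Qed.

Lemma card_ndeg_ge2 : #|[pred z : nbasis n | 1 < ndeg z]| = (#|{: wT n}| + 3 * n + 5)%N.
Proof. count_basis. Qed.

Lemma card_ndeg3 : #|[pred z : nbasis n | ndeg z == 3]| = (2 * n + 2)%N.
Proof. count_basis. Qed.

Lemma card_wT : #|{: wT n}| = 'C(n, 2).
Proof.
rewrite card_sig -sum1_card big_mkcond /=.
rewrite -(pair_big xpredT xpredT (fun i j : 'I_n => if (i < j)%N then 1 else 0)%N) /=.
rewrite exchange_big -bin2_sum big_mkord; apply: eq_bigr => j _.
rewrite -(big_mkord xpredT (fun i => if (i < j)%N then 1 else 0)%N).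
rewrite (big_cat_nat _ (n := j)) //= ?(ltnW (ltn_ord j)) //.
rewrite (@eq_big_nat _ _ _ 0 j _ (fun _ => 1%N)) => [|i /andP[_ ->]] //.
rewrite (@eq_big_nat _ _ _ j n _ (fun _ => 0%N)) => [|i /andP[+ _]]; last first.
  by rewrite leqNgt => /negbTE ->.
by rewrite !sum_nat_const_nat muln1 muln0 subn0 addn0.
Qed.

Lemma triangular_succ : ((n * n.+1) %/ 2 = 'C(n, 2) + n)%N.
Proof. by rewrite divn2 mulnC -bin2 binS bin1 addnC. Qed.

End Counting.

Lemma directv_addA (K : fieldType) (vT : vectType K) (U1 U2 U3 : {vspace vT}) :
  directv (U1 + U2 + U3) -> directv (U1 + (U2 + U3)).
Proof. by rewrite !directvE /= addvA addnA. Qed.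

(** * Gradings of n(n) *)

Section Grading.
Variables (F : fieldType) (n : nat) (N1 N2 N3 : {vspace nalg F n}).
Hypothesis gradedN : is_grading3 N1 N2 N3.
Local Notation V := (nalg F n).
Local Notation N23 := (N2 + N3)%VS.

Let Ng (k : nat) := match k with 1 => N1 | 2 => N2 | 3 => N3 | _ => 0%VS end.

Lemma nbr_graded i j v w : (1 <= i <= 3)%N -> (1 <= j <= 3)%N ->
  v \in Ng i -> w \in Ng j -> nbr v w \in Ng (i + j).
Proof. by case: gradedN => _ _ graded hi hj; apply: graded. Qed.

Lemma nbr_graded0 i j v w : (1 <= i <= 3)%N -> (1 <= j <= 3)%N -> (3 < i + j)%N ->
  v \in Ng i -> w \in Ng j -> nbr v w = 0.
Proof.
move=> i_ok j_ok ij_gt3 vi wj; apply/eqP; rewrite -memv0.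
by move: (nbr_graded i_ok j_ok vi wj); case: (i + j)%N ij_gt3 => [|[|[|[|k]]]].
Qed.

Lemma nbr_N1N1 v w : v \in N1 -> w \in N1 -> nbr v w \in N2.
Proof. exact: (nbr_graded (i := 1) (j := 1)). Qed.

Lemma nbr_N1N2 v w : v \in N1 -> w \in N2 -> nbr v w \in N3.
Proof. exact: (nbr_graded (i := 1) (j := 2)). Qed.

Lemma nbr_N2N2 v w : v \in N2 -> w \in N2 -> nbr v w = 0.
Proof. exact: (nbr_graded0 (i := 2) (j := 2)). Qed.

Lemma grading_direct : directv (N1 + N23).
Proof. by case: gradedN => /directv_addA. Qed.

Lemma grading_full : (N1 + N23)%VS = fullv.
Proof. by case: gradedN => _ <- _; rewrite addvA. Qed.

Lemma capv_N1_N23 : (N1 :&: N23 = 0)%VS.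
Proof. by move: grading_direct; rewrite directv_addE /= => /and3P[_ _ /eqP]. Qed.

Lemma capv_N2_N3 : (N2 :&: N3 = 0)%VS.
Proof. by move: grading_direct; rewrite directv_addE /= => /and3P[_ /directv_addP]. Qed.

Lemma grading_split v : exists2 v', v' \in N23 & v - v' \in N1.
Proof.
have /memv_addP[v1 v1N1 [v' v'N23 ->]] : v \in (N1 + N23)%VS.
  by rewrite grading_full memvf.
by exists v'; rewrite ?addrK.
Qed.

Lemma grading_decomp v :
  exists v1 v2 v3, [/\ v1 \in N1, v2 \in N2, v3 \in N3 & v = v1 + v2 + v3].
Proof.
have : v \in (N1 + N2 + N3)%VS by case: gradedN => _ ->; rewrite memvf.
case/memv_addP=> _ /memv_addP[v1 v1N1 [v2 v2N2 ->]] [v3 v3N3 ->].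
by exists v1, v2, v3.
Qed.

Lemma nbr_N3r v t : t \in N3 -> nbr v t = 0.
Proof.
move=> tN3; have [v1 [v2 [v3 [v1N1 v2N2 v3N3 ->]]]] := grading_decomp v.
rewrite !nbrDl (nbr_graded0 (i := 1) (j := 3) _ _ _ v1N1 tN3) //.
rewrite (nbr_graded0 (i := 2) (j := 3) _ _ _ v2N2 tN3) //.
by rewrite (nbr_graded0 (i := 3) (j := 3) _ _ _ v3N3 tN3) // !addr0.
Qed.

Lemma nbr_N3l v t : t \in N3 -> nbr t v = 0.
Proof. by move=> tN3; rewrite nbrC nbr_N3r ?oppr0. Qed.

Lemma nbr_N23r v g : g \in N23 -> nbr v g \in N3.
Proof.
case/memv_addP=> g2 g2N2 [g3 g3N3 ->]; rewrite nbrDr (nbr_N3r _ g3N3) addr0.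
have [v1 [v2 [v3 [v1N1 v2N2 v3N3 ->]]]] := grading_decomp v.
by rewrite !nbrDl (nbr_N2N2 v2N2 g2N2) (nbr_N3l _ v3N3) !addr0 nbr_N1N2.
Qed.

Lemma nbr_N23l v g : g \in N23 -> nbr g v \in N3.
Proof. by move=> gN23; rewrite nbrC rpredN nbr_N23r. Qed.

Lemma nbr_N23_N23 g g' : g \in N23 -> g' \in N23 -> nbr g g' = 0.
Proof.
case/memv_addP=> g2 g2N2 [g3 g3N3 ->] /memv_addP[g2' g2'N2 [g3' g3'N3 ->]].
rewrite nbrDr (nbr_N3r _ g3'N3) addr0 nbrDl (nbr_N3l _ g3N3) addr0.
exact: nbr_N2N2.
Qed.

Lemma nbr_split v w v' w' : v' \in N23 -> w' \in N23 ->
  nbr v w = nbr (v - v') (w - w') + (nbr v w' + nbr v' (w - w')).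
Proof.
move=> v'N23 w'N23; rewrite !nbrBl !nbrBr (nbr_N23_N23 v'N23 w'N23) subr0.
by rewrite addrA addrAC !subrK.
Qed.

Lemma nbr_in_N23 v w : nbr v w \in N23.
Proof.
have [v' v'N23 v1N1] := grading_split v; have [w' w'N23 w1N1] := grading_split w.
rewrite (nbr_split v w v'N23 w'N23); apply: memv_add; first exact: nbr_N1N1.
by apply: rpredD; [apply: nbr_N23r | apply: nbr_N23l].
Qed.

Lemma nbr_N3_split v w v' w' : v' \in N23 -> v - v' \in N1 ->
  w' \in N23 -> w - w' \in N1 -> nbr v w \in N3 -> nbr v w = nbr v w' + nbr v' w.
Proof.
move=> v'N23 v1N1 w'N23 w1N1 vwN3.
have split := nbr_split v w v'N23 w'N23.
suff v1w1_0 : nbr (v - v') (w - w') = 0.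
  by rewrite split v1w1_0 add0r nbrBr (nbr_N23_N23 v'N23 w'N23) subr0.
apply/eqP; rewrite -memv0 -capv_N2_N3 memv_cap nbr_N1N1 //=.
rewrite -[nbr _ _](addrK (nbr v w' + nbr v' (w - w'))) -split.
by apply: rpredB => //; apply: rpredD; [apply: nbr_N23r | apply: nbr_N23l].
Qed.

Local Notation d := (@deltav F (nbasis n)).
Local Notation bA := (@bA n). Local Notation bB := (@bB n).
Local Notation bX := (@bX n). Local Notation bU := (@bU n).
Local Notation bY := (@bY n). Local Notation bC := (@bC n).
Local Notation bF := (@bF n). Local Notation bH := (@bH n).

Ltac simp_ring :=
  rewrite ?(mulr1n, mulr0n, mulr0, mul0r, mulr1, mul1r, subr0, sub0r, addr0, add0r, oppr0, opprK).

Ltac coord_simpl := rewrite ?deltav_nbasisE !ffunE /= ?regular_scaleE; simp_ring.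

Tactic Notation "coord_eq" constr(z) :=
  move/(congr1 (fun v : V => v z)); coord_simpl.

Lemma c_in_N23 : d bC \in N23.
Proof. by rewrite -nbr_ab nbr_in_N23. Qed.

Lemma h_in_N3 : d bH \in N3.
Proof. by rewrite -nbr_ac nbr_N23r ?c_in_N23. Qed.

Lemma N23_coord_a g : g \in N23 -> g bA = 0.
Proof. by move=> gN23; have := nbr_N23_N23 gN23 c_in_N23; coord_eq bH. Qed.

Lemma N23_coord_b g : g \in N23 -> g bB = 0.
Proof. by move=> gN23; have := nbr_N3l (d bA) (nbr_N23l (d bA) gN23); coord_eq bH. Qed.

Lemma nbr_a_N23 g : g \in N23 -> nbr (d bA) g = g bY *: d bF + g bC *: d bH.
Proof.
move=> gN23; rewrite !deltav_nbasisE; apply/ffunP => -[] * /=.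
all: rewrite !ffunE /= !regular_scaleE ?(N23_coord_a gN23) ?(N23_coord_b gN23); ring.
Qed.

Lemma derived_span_sub : (basis_span derived_basis <= N23)%VS.
Proof.
apply: basis_span_subv => -[] // => [p||i|i|i||] _.
- by rewrite -nbr_ee nbr_in_N23.
- exact: c_in_N23.
- by rewrite -nbr_ex nbr_in_N23.
- by rewrite -nbr_eu nbr_in_N23.
- by rewrite -nbr_ey nbr_in_N23.
- by rewrite -nbr_ay nbr_in_N23.
- by rewrite -nbr_ac nbr_in_N23.
Qed.

Lemma N1_eq0 v : v \in N1 -> (forall i, v (bE i) = 0) ->
  v bA = 0 -> v bB = 0 -> v bX = 0 -> v bU = 0 -> v bY = 0 -> v = 0.
Proof.
move=> vN1 ve va vb vx vu vy; apply/eqP; rewrite -memv0 -capv_N1_N23 memv_cap vN1.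
by apply: (subvP derived_span_sub); apply/mem_basis_span => -[].
Qed.

Section GeneratorComponents.
Variables x' y' u' b' : V.
Hypotheses (x'N23 : x' \in N23) (x1N1 : d bX - x' \in N1).
Hypotheses (y'N23 : y' \in N23) (y1N1 : d bY - y' \in N1).
Hypotheses (u'N23 : u' \in N23) (u1N1 : d bU - u' \in N1).
Hypotheses (b'N23 : b' \in N23) (b1N1 : d bB - b' \in N1).

Let ab_coords0 := (N23_coord_a x'N23, N23_coord_b x'N23, N23_coord_a y'N23, N23_coord_b y'N23,
  N23_coord_a u'N23, N23_coord_b u'N23, N23_coord_a b'N23, N23_coord_b b'N23).

Lemma y'_x'_coords : [/\ y' bU = 0, y' bY = 1 & x' bX = 0].
Proof.
have Exy : d bH = nbr (d bX) y' + nbr x' (d bY).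
  by rewrite -nbr_xy; apply: nbr_N3_split; rewrite ?nbr_xy ?h_in_N3.
have Eby : d bH = nbr (d bB) y' + nbr b' (d bY).
  by rewrite -nbr_by; apply: nbr_N3_split; rewrite ?nbr_by ?h_in_N3.
have Ebu : d bH = nbr (d bB) u' + nbr b' (d bU).
  by rewrite -nbr_bu; apply: nbr_N3_split; rewrite ?nbr_bu ?h_in_N3.
have yu : y' bU = 0 by move: Exy; coord_eq bF; rewrite !ab_coords0 addr0.
have bx : b' bX = 0 by move: Ebu; coord_eq bF.
have yy : y' bY = 1 by move: Eby; coord_eq bH; rewrite !ab_coords0 yu bx !addr0 add0r.
split=> //; move: Exy; coord_eq bH; rewrite !ab_coords0 yy add0r -[X in X = _]addr0.
by move/addrI.
Qed.

Lemma f_in_N3 : d bF \in N3.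
Proof.
have [_ yy _] := y'_x'_coords.
have -> : d bF = nbr (d bA) y' - y' bC *: d bH by rewrite nbr_a_N23 // yy scale1r addrK.
by rewrite rpredB ?rpredZ ?h_in_N3 ?nbr_N23r.
Qed.

Lemma u'_coords : u' bU = 1 /\ u' bY = 0.
Proof.
have [_ _ xx] := y'_x'_coords.
have Exu : d bF = nbr (d bX) u' + nbr x' (d bU).
  by rewrite -nbr_xu; apply: nbr_N3_split; rewrite ?nbr_xu ?f_in_N3.
by split; move: Exu; [coord_eq bF | coord_eq bH]; rewrite ?ab_coords0 ?xx addr0.
Qed.

Lemma u'_y'_coords :
  [/\ u' bX = 0, y' bX = 0, forall i, u' (bE i) = 0 & forall i, y' (bE i) = 0].
Proof.
have [yu yy _] := y'_x'_coords; have [uu uy] := u'_coords.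
have Euy := nbr_N23_N23 u'N23 y'N23; have Eyu := nbr_N23_N23 y'N23 u'N23.
split.
- by move: Euy; coord_eq bH; rewrite !ab_coords0 uu uy yy; simp_ring.
- by move: Eyu; coord_eq bF; rewrite !ab_coords0 uu uy yu; simp_ring.
- by move=> i; move: Euy; coord_eq (bYi i); rewrite uy yy; simp_ring.
- by move=> i; move: Eyu; coord_eq (bUi i); rewrite uu yu; simp_ring.
Qed.

Lemma generators_in_N23 : d bU \in N23 /\ d bY \in N23.
Proof.
have [yu yy _] := y'_x'_coords; have [uu uy] := u'_coords.
have [ux yx ue ye] := u'_y'_coords.
have -> : d bU = u'.
  apply/eqP; rewrite -subr_eq0; apply/eqP/N1_eq0 => //; try move=> i;
  by coord_simpl; rewrite ?ue ?ab_coords0 ?ux ?uu ?uy ?subrr ?oppr0.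
have -> : d bY = y'.
  apply/eqP; rewrite -subr_eq0; apply/eqP/N1_eq0 => //; try move=> i;
  by coord_simpl; rewrite ?ye ?ab_coords0 ?yx ?yu ?yy ?subrr ?oppr0.
exact: conj u'N23 y'N23.
Qed.

End GeneratorComponents.

Lemma u_y_in_N23 : d bU \in N23 /\ d bY \in N23.
Proof.
have [x' x'N23 x1N1] := grading_split (d bX); have [y' y'N23 y1N1] := grading_split (d bY).
have [u' u'N23 u1N1] := grading_split (d bU); have [b' b'N23 b1N1] := grading_split (d bB).
exact: generators_in_N23 x'N23 x1N1 y'N23 y1N1 u'N23 u1N1 b'N23 b1N1.
Qed.

Lemma N23_eq : N23 = basis_span [pred z | (1 < ndeg z)%N].
Proof.
have [uN23 yN23] := u_y_in_N23.
apply/eqP; rewrite eqEsubv; apply/andP; split.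
  apply/subvP => g gN23; have Egu := nbr_N23_N23 gN23 uN23.
  apply/mem_basis_span => z; rewrite !inE /= => deg1; case: z deg1 => // [i|||] _.
  - by move: Egu; coord_eq (bUi i).
  - exact: N23_coord_a.
  - exact: N23_coord_b.
  - by move: Egu; coord_eq bF.
apply: basis_span_subv => z deg2.
have [-> | zu] := eqVneq z bU; first exact: uN23.
have [-> | zy] := eqVneq z bY; first exact: yN23.
by apply/(subvP derived_span_sub)/deltav_basis_span; case: z deg2 zu zy.
Qed.

Lemma span_deg3_sub : (basis_span [pred z | ndeg z == 3%N] <= N3)%VS.
Proof.
have [uN23 yN23] := u_y_in_N23.
apply: basis_span_subv => z; rewrite inE.
case: z => [i||||||p||i|i|i||] deg3; try discriminate deg3.
- by rewrite -nbr_eu; exact: nbr_N23r uN23.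
- by rewrite -nbr_ey; exact: nbr_N23r yN23.
- by rewrite -nbr_ay; exact: nbr_N23r yN23.
- exact: h_in_N3.
Qed.

Lemma nbr_in_N2_span3 v w : nbr v w \in (N2 + basis_span [pred z | ndeg z == 3%N])%VS.
Proof.
have [v' v'N23 v1N1] := grading_split v; have [w' w'N23 w1N1] := grading_split w.
rewrite (nbr_split v w v'N23 w'N23); apply: memv_add; first exact: nbr_N1N1.
rewrite N23_eq in v'N23 w'N23; apply: rpredD; first exact: nbr_span_deg3.
by rewrite nbrC rpredN; apply: nbr_span_deg3.
Qed.

Lemma N3_eq : N3 = basis_span [pred z | ndeg z == 3%N].
Proof.
apply/eqP; rewrite eqEsubv span_deg3_sub andbT; apply/subvP => v vN3.
have vN23 : v \in N23 by apply: (subvP (addvSr N2 N3)).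
have Eav := nbr_N3r (d bA) vN3; rewrite (nbr_a_N23 vN23) in Eav.
have vc : v bC = 0 by move: Eav; coord_eq bH.
have vy : v bY = 0 by move: Eav; coord_eq bF.
have vu : v bU = 0 by move: (nbr_N3r (d bB) vN3); coord_eq bH; rewrite vy addr0.
have : v \in (N2 + basis_span [pred z | ndeg z == 3%N])%VS.
  rewrite N23_eq in vN23; move/mem_basis_span: vN23 => v0.
  rewrite (ffun_deltav_sum v0); apply: rpred_sum => z; rewrite inE.
  case: z => [i||||||p||i|i|i||] deg2; try discriminate deg2;
    try by apply/rpredZ/(subvP (addvSr _ _)); apply: deltav_basis_span.
  - by rewrite vu scale0r rpred0.
  - by rewrite vy scale0r rpred0.
  - by apply: rpredZ; rewrite -nbr_ee; exact: nbr_in_N2_span3.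
  - by rewrite vc scale0r rpred0.
  - by apply: rpredZ; rewrite -nbr_ex; exact: nbr_in_N2_span3.
case/memv_addP=> v2 v2N2 [s sS3 ev].
suff v20 : v2 = 0 by rewrite ev v20 add0r.
apply/eqP; rewrite -memv0 -capv_N2_N3 memv_cap v2N2 andTb.
have -> : v2 = v - s by rewrite ev addrK.
by apply: rpredB; [exact: vN3 | exact: (subvP span_deg3_sub)].
Qed.

Lemma grading_dims :
  [/\ \dim N1 = (n + 3)%N, \dim N2 = ((n * n.+1) %/ 2 + 3)%N & \dim N3 = (2 * n + 2)%N].
Proof.
have d1 := dimv_disjoint_sum capv_N1_N23; have d23 := dimv_disjoint_sum capv_N2_N3.
rewrite grading_full dimvf /dim /= muln1 card_nbasis in d1.
rewrite N23_eq dim_basis_span card_ndeg_ge2 in d1 d23.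
rewrite N3_eq dim_basis_span card_ndeg3 in d23 *.
by rewrite triangular_succ -card_wT; split; lia.
Qed.

End Grading.

(** * Eigenspaces of a derivation *)

Section Eigenspaces.
Variables (F : fieldType) (vT : vectType F) (f : 'End(vT)).
Local Notation E := (passmx.leigenspace f).

Lemma mem_leigenspace v a : (v \in E a) = (f v == a *: v).
Proof. by rewrite memv_ker add_lfunE opp_lfunE scale_lfunE id_lfunE subr_eq0. Qed.

Lemma leigenspace_disjoint a b : a != b -> (E a :&: E b = 0)%VS.
Proof.
move=> neq_ab; apply/eqP; rewrite -subv0; apply/subvP => v /memv_capP[].
rewrite !mem_leigenspace memv0 => /eqP fva /eqP; rewrite fva => /eqP.
by rewrite -subr_eq0 -scalerBl scaler_eq0 subr_eq0 (negbTE neq_ab).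
Qed.

Lemma leigenspace_add_disjoint a b c : a != c -> b != c -> a != b ->
  ((E a + E b) :&: E c = 0)%VS.
Proof.
move=> neq_ac neq_bc neq_ab; apply/eqP; rewrite -subv0; apply/subvP => v.
case/memv_capP=> /memv_addP[v1 v1a [v2 v2b ->]]; rewrite memv0 mem_leigenspace.
move: (v1a) (v2b); rewrite !mem_leigenspace => /eqP fv1 /eqP fv2.
rewrite linearD /= fv1 fv2 => /eqP fv.
have e : (a - c) *: v1 + (b - c) *: v2 = 0.
  by rewrite !scalerBl addrACA -opprD -scalerDr fv subrr.
have w0 : (a - c) *: v1 = 0.
  apply/eqP; rewrite -memv0 -(leigenspace_disjoint neq_ab) memv_cap memvZ // andTb.
  by move/eqP: e; rewrite addr_eq0 => /eqP->; rewrite memvN memvZ.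
move: (e); rewrite w0 add0r => /eqP; rewrite scaler_eq0 subr_eq0 (negbTE neq_bc) => /eqP->.
move/eqP: w0; rewrite scaler_eq0 subr_eq0 (negbTE neq_ac) => /eqP->.
by rewrite addr0.
Qed.

Lemma directv_leigenspace3 a b c : a != b -> a != c -> b != c ->
  directv (E a + E b + E c).
Proof.
move=> neq_ab neq_ac neq_bc; rewrite directv_addE /= directv_addE /=.
rewrite !directv_trivial (leigenspace_disjoint neq_ab).
by rewrite (leigenspace_add_disjoint neq_ac neq_bc neq_ab) eqxx.
Qed.

End Eigenspaces.

Lemma pchar0_natr_eq (F : fieldType) : [pchar F] =i pred0 ->
  forall m k, (m%:R == k%:R :> F) = (m == k).
Proof.
move=> charF0 m k; wlog le_km : m k / (k <= m)%N.
  by move=> W; case/orP: (leq_total k m) => /W //; rewrite eq_sym => ->; rewrite eq_sym.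
by rewrite -subr_eq0 -natrB // ((pcharf0P F).1 charF0) subn_eq0 eqn_leq le_km andbT.
Qed.

Section DerivationGrading.
Variables (F : fieldType) (n : nat) (D : 'End(nalg F n)).
Hypotheses (charF0 : [pchar F] =i pred0) (derD : is_derivation D).
Hypothesis spectrumD : forall a : F, passmx.leigenvalue D a <-> a \in [:: 1; 2%:R; 3%:R].
Local Notation E k := (passmx.leigenspace D k%:R).

Lemma nbr_leigenspace i j v w : v \in E i -> w \in E j -> nbr v w \in E (i + j).
Proof.
rewrite !mem_leigenspace => /eqP Dv /eqP Dw.
by rewrite derD Dv Dw nbrZl nbrZr -scalerDl natrD.
Qed.

Lemma leigenspace_gt3 k : (3 < k)%N -> E k = 0%VS.
Proof.
move=> k_gt3; apply/eqP; apply: contraTT k_gt3 => /(spectrumD _).1.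
by rewrite !inE -[1]/(1%:R) !pchar0_natr_eq //; case/or3P=> /eqP->.
Qed.

Lemma leigenspace_grading :
  (E 1 + E 2 + E 3)%VS = fullv -> is_grading3 (E 1) (E 2) (E 3).
Proof.
move=> full; split; [|exact: full|].
  by apply: directv_leigenspace3; rewrite pchar0_natr_eq.
have component k : (0 < k)%N ->
    match k with 1 => E 1 | 2 => E 2 | 3 => E 3 | _ => 0%VS end = E k.
  case: k => [|[|[|[|k]]]] k_gt0; [discriminate k_gt0 | by [] | by [] | by [] |].
  by rewrite leigenspace_gt3.
move=> i j /andP[i_gt0 _] /andP[j_gt0 _] v w.
rewrite (component i i_gt0) (component j j_gt0) (component (i + j)%N).
  exact: nbr_leigenspace.
by rewrite addn_gt0 i_gt0.
Qed.

End DerivationGrading.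

Theorem mainTheorem5 (F : fieldType) (charF0 : [pchar F] =i pred0)
    (n : nat) (hn : (0 < n)%N) :
  (forall D : 'End(nalg F n),
     is_derivation D ->
     (forall a : F, passmx.leigenvalue D a <-> a \in [:: 1; 2%:R; 3%:R]) ->
     (passmx.leigenspace D 1 + passmx.leigenspace D 2%:R + passmx.leigenspace D 3%:R)%VS = fullv ->
     [/\ \dim (passmx.leigenspace D 1) = (n + 3)%N,
         \dim (passmx.leigenspace D 2%:R) = ((n * n.+1) %/ 2 + 3)%N &
         \dim (passmx.leigenspace D 3%:R) = (2 * n + 2)%N]) /\
  (forall N1 N2 N3 : {vspace nalg F n},
     is_grading3 N1 N2 N3 ->
     [/\ \dim N1 = (n + 3)%N,
         \dim N2 = ((n * n.+1) %/ 2 + 3)%N &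
         \dim N3 = (2 * n + 2)%N]).
Proof.
split=> [D derD spectrumD full | N1 N2 N3]; last exact: grading_dims.
exact/grading_dims/(leigenspace_grading charF0 derD spectrumD full).
Qed.
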